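(* Let $A\subseteq\mathbb{N}$ and $x\in\big(\underline{d}_\infty(A),\overline{d}_\infty(A)\big)$. Then there is a function $\mu:\mathcal{P}(\mathbb{N})\to[0,1]$ of the form $$\mu(E)=\int_{\Omega}\mu_\alpha^{\mathcal{F}}(E)\,\mathrm{d}\psi(\mathcal{F},\alpha),\qquad E\subseteq\mathbb{N},$$ for some Borel probability measure $\psi$ on $\Omega=\beta\mathbb{N}^*\times[-1,\infty)$, which is a density measure and satisfies $\mu(A)=x$.
   Context: $\mathbb{N}=\{1,2,3,\dots\}$. For $A\subseteq\mathbb{N}$ let $A(n)=|A\cap[1,n]|$; $\mathcal{D}$ is the collection of sets for which $d(A)=\lim_{n\to\infty}A(n)/n$ exists. A density measure is a function $\mu:\mathcal{P}(\mathbb{N})\to[0,1]$ with $\mu(\mathbb{N})=1$, finitely additive on disjoint sets, and $\mu=d$ on $\mathcal{D}$. For $\alpha\ge-1$ and $A\subseteq\mathbb{N}$ put $A_\alpha(n)=\sum_{k=1}^n\chi_A(k)k^\alpha$ (so $\mathbb{N}_\alpha(n)=\sum_{k=1}^nk^\alpha$), $\underline{d}_\alpha(A)=\liminf_{n\to\infty}\frac{A_\alpha(n)}{\mathbb{N}_\alpha(n)}$, $\overline{d}_\alpha(A)=\limsup_{n\to\infty}\frac{A_\alpha(n)}{\mathbb{N}_\alpha(n)}$, $\underline{d}_\infty(A)=\inf_{\alpha\ge-1}\underline{d}_\alpha(A)$ and $\overline{d}_\infty(A)=\sup_{\alpha\ge-1}\overline{d}_\alpha(A)$. $\beta\mathbb{N}^*$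 denotes the set of free ultrafilters on $\mathbb{N}$ (with the Stone–Čech topology). For a free ultrafilter $\mathcal{F}$ and a bounded real sequence $(x_n)$, $\mathcal{F}\text{-}\lim x_n$ is the unique $L$ with $\{n;|x_n-L|<\varepsilon\}\in\mathcal{F}$ for all $\varepsilon>0$. Set $\mu_\alpha^{\mathcal{F}}(E)=\mathcal{F}\text{-}\lim\frac{E_\alpha(n)}{\mathbb{N}_\alpha(n)}$. *)

From HB Require Import structures.
From mathcomp Require Import all_boot all_order all_algebra.
From mathcomp Require Import all_classical all_reals all_analysis.
Set Implicit Arguments. Unset Strict Implicit. Unset Printing Implicit Defensive.
Import Order.TTheory GRing.Theory Num.Theory.
Import numFieldNormedType.Exports.
Local Open Scope classical_set_scope.
Local Open Scope ring_scope.

(* Encoding of N = {1,2,3,...}: a set E : set nat represents the subset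
   {k+1 | k \in E} of N, i.e. the natural number k : nat stands for k+1.
   Sequences indexed by N are likewise written u : nat -> R with u n
   standing for the term of index n+1. *)

Section Densities.
Variable R : realType.

Definition wsum (E : set nat) (alpha : R) (n : nat) : R :=
  \sum_(k < n) (\1_E k : R) * ((k.+1)%:R `^ alpha).

Definition Nsum (alpha : R) (n : nat) : R :=
  \sum_(k < n) ((k.+1)%:R `^ alpha).

Definition ratio (E : set nat) (alpha : R) : nat -> R :=
  fun n => wsum E alpha n.+1 / Nsum alpha n.+1.

Definition lower_d (alpha : R) (E : set nat) : R := limn_inf (ratio E alpha).
Definition upper_d (alpha : R) (E : set nat) : R := limn_sup (ratio E alpha).

Definition lower_d_infty (E : set nat) : R :=
  inf [set lower_d a E | a in [set a : R | -1 <= a]].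
Definition upper_d_infty (E : set nat) : R :=
  sup [set upper_d a E | a in [set a : R | -1 <= a]].

Definition counting (E : set nat) (n : nat) : R := \sum_(k < n) (\1_E k : R).

Definition has_density (E : set nat) (l : R) : Prop :=
  (fun n => counting E n.+1 / n.+1%:R) @ \oo --> l.

Definition density_measure (mu : set nat -> R) : Prop :=
  [/\ (forall E, 0 <= mu E <= 1),
      mu setT = 1,
      (forall E1 E2, E1 `&` E2 = set0 -> mu (E1 `|` E2) = mu E1 + mu E2) &
      (forall E l, has_density E l -> mu E = l)].

Definition free_ultrafilter (F : set (set nat)) : Prop :=
  [/\ ~ F set0, F setT,
      (forall S T, F S -> S `<=` T -> F T),
      (forall S T, F S -> F T -> F (S `&` T)) &
      ((forall S, F S \/ F (~` S)) /\ (forall S, finite_set S -> ~ F S))].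

Definition Flim (F : set (set nat)) (u : nat -> R) : R :=
  xget 0 [set L : R | forall eps : R, 0 < eps -> F [set n | `|u n - L| < eps]].

(* Ambient carrier; Omega = beta N^* x [-1, oo) is the subset OmegaSet. *)
Definition Amb := (set (set nat) * R)%type.

Definition OmegaSet : set Amb :=
  [set w | free_ultrafilter w.1 /\ -1 <= w.2].

(* basic open sets of the product topology on Omega:
   {F in beta N^* | E \in F} x ((a,b) \cap [-1,oo)) *)
Definition rect (E : set nat) (a b : R) : set Amb :=
  [set w | OmegaSet w /\ w.1 E /\ a < w.2 < b].

Definition Omega_open (V : set Amb) : Prop :=
  V `<=` OmegaSet /\
  forall w, V w -> exists E a b, rect E a b w /\ rect E a b `<=` V.

(* sets whose trace on Omega is open; the sigma-algebra generated by them
   traces on Omega exactly the Borel sets of Omega *)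
Definition OmegaG : set (set Amb) := [set U | Omega_open (U `&` OmegaSet)].

Definition OmegaT : measurableType (OmegaG.-sigma) := g_sigma_algebraType OmegaG.

Definition muFa (w : Amb) (E : set nat) : R := Flim w.1 (ratio E w.2).

End Densities.

(* For alpha >= -1 the weights k^alpha are monotone, their partial sums N_alpha(n)
   diverge and n^(alpha+1) = O(N_alpha(n)); Abel summation then shows that
   E_alpha(n)/N_alpha(n) -> d(E) whenever E has asymptotic density d(E), so every
   mu_alpha^F is a density measure.  Since lower_d_infty(A) < x < upper_d_infty(A),
   some alpha1, alpha2 >= -1 satisfy lower_d_alpha1(A) < x < upper_d_alpha2(A), and
   free ultrafilters through the indices where the ratios stay below, resp. above,
   a level between give points w1, w2 of Omega with mu_w1(A) < x < mu_w2(A).  A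
   convex combination of the Dirac masses at w1 and w2 is then the required psi. *)

From HB Require Import structures.
From mathcomp Require Import all_boot all_order all_algebra.
From mathcomp Require Import all_classical all_reals all_analysis.
From mathcomp Require Import ring lra zify measurable_realfun.
(* Imported last: mathcomp also defines [ratio] and [counting]. *)
Import Order.TTheory GRing.Theory Num.Theory.
Import numFieldNormedType.Exports.
Local Open Scope classical_set_scope.
Local Open Scope ring_scope.

Lemma finite_set_nat_bounded (S : set nat) :
  finite_set S -> exists N, forall n, S n -> (n < N)%N.
Proof.
move=> /finite_seqP [s ->]; exists (\max_(i <- s) i).+1 => n sn; rewrite ltnS.
exact: (@leq_bigmax_seq _ _ xpredT id).
Qed.

Definition is_Flim {R : realType} (F : set (set nat)) (u : nat -> R) (L : R) :=
  forall eps : R, 0 < eps -> F [set n | `|u n - L| < eps].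

Section FreeUltrafilter.
Context {R : realType} {F : set (set nat)} (hF : free_ultrafilter F).
Implicit Types (u v : nat -> R) (a b y L : R).

Lemma ultra_not_empty : ~ F set0.
Proof. by case: hF. Qed.

Lemma ultraT : F setT.
Proof. by case: hF. Qed.

Lemma ultraS {S T} : F S -> S `<=` T -> F T.
Proof. by case: hF => _ _ + _ _; apply. Qed.

Lemma ultraI {S T} : F S -> F T -> F (S `&` T).
Proof. by case: hF => _ _ _ + _; apply. Qed.

Lemma ultra_setVsetC S : F S \/ F (~` S).
Proof. by case: hF => _ _ _ _ []. Qed.

Lemma ultra_infinite {S} : F S -> infinite_set S.
Proof. by case: hF => _ _ _ _ [_] + /[swap]; apply. Qed.

Lemma ultra_tail N : F [set n | (N <= n)%N].
Proof.
case: (ultra_setVsetC [set n | (N <= n)%N]) => // head; exfalso.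
apply: (ultra_infinite head); apply: (sub_finite_set _ (finite_II N)) => n /=.
by rewrite ltnNge => /negP.
Qed.

Lemma is_Flim_unique {u L1 L2} : is_Flim F u L1 -> is_Flim F u L2 -> L1 = L2.
Proof.
move=> h1 h2; apply: contrapT => /eqP; rewrite -subr_eq0 => neq.
set e := `|L1 - L2| / 2.
have e0 : 0 < e by rewrite divr_gt0 // normr_gt0.
apply: ultra_not_empty; apply: (ultraS (ultraI (h1 e e0) (h2 e e0))) => n /= [n1 n2].
have := ler_distD (u n) L1 L2; rewrite [`|L1 - u n|]distrC {1}(splitr `|L1 - L2|) -/e.
by rewrite leNgt ltrD.
Qed.

Lemma FlimE {u L} : is_Flim F u L -> Flim F u = L.
Proof.
move=> hL; apply: (is_Flim_unique _ hL).
by apply: (xgetPex 0 (P := [set L : R | is_Flim F u L])); exists L.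
Qed.

Lemma is_Flim_le {u L y} : is_Flim F u L -> F [set n | u n <= y] -> L <= y.
Proof.
move=> hL hy; rewrite leNgt; apply/negP => yL; apply: ultra_not_empty.
have Ly0 : 0 < L - y by rewrite subr_gt0.
apply: (ultraS (ultraI hy (hL _ Ly0))) => n /= [uy].
rewrite distrC ger0_norm ?subr_ge0 ?(le_trans uy (ltW yL)) //.
by rewrite ltrD2l ltrN2 ltNge uy.
Qed.

Lemma is_Flim_ge {u L y} : is_Flim F u L -> F [set n | y <= u n] -> y <= L.
Proof.
move=> hL hy; rewrite leNgt; apply/negP => Ly; apply: ultra_not_empty.
have yL0 : 0 < y - L by rewrite subr_gt0.
apply: (ultraS (ultraI hy (hL _ yL0))) => n /= [yu].
rewrite ger0_norm ?subr_ge0 ?(le_trans (ltW Ly) yu) //.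
by rewrite ltrD2r ltNge yu.
Qed.

(* The limit is the supremum of the y such that y <= u n for F-almost all n. *)
Lemma is_Flim_bounded {u a b} : (forall n, a <= u n <= b) -> exists L, is_Flim F u L.
Proof.
move=> uab.
pose Y := [set y : R | F [set n | y <= u n]].
have Ya : Y a by apply: (ultraS ultraT) => n _ /=; case/andP: (uab n).
have Yb : ubound Y b.
  move=> y Yy; rewrite leNgt; apply/negP => by_; apply: ultra_not_empty.
  apply: (ultraS Yy) => n /= yu; case/andP: (uab n) => _ ub.
  by move: (le_lt_trans ub by_); rewrite ltNge yu.
have hY : has_sup Y by split; [exists a | exists b].
exists (sup Y) => eps eps0.
have eps20 : 0 < eps / 2 by rewrite divr_gt0.
have [e Ye He] := sup_adherent eps20 hY.
have notY : ~ Y (sup Y + eps / 2).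
  by move=> /(sup_upper_bound hY); rewrite gerDl leNgt eps20.
have HC : F (~` [set n | sup Y + eps / 2 <= u n]).
  by case: (ultra_setVsetC [set n | sup Y + eps / 2 <= u n]).
apply: (ultraS (ultraI Ye HC)) => n /= [eu /negP]; rewrite -ltNge => uS.
rewrite ltr_norml; apply/andP; split; last by rewrite ltrBlDl; lra.
by rewrite ltrBrDl; lra.
Qed.

Lemma is_Flim_Flim {u a b} : (forall n, a <= u n <= b) -> is_Flim F u (Flim F u).
Proof. by move=> /is_Flim_bounded [L hL]; rewrite (FlimE hL). Qed.

Lemma cvg_is_Flim {u l} : u @ \oo --> l -> is_Flim F u l.
Proof.
move=> /cvgrPdist_lt ul eps eps0; have [N _ HN] := ul eps eps0.
by apply: (ultraS (ultra_tail N)) => n /HN /=; rewrite distrC.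
Qed.

Lemma is_FlimD {u v a b} : is_Flim F u a -> is_Flim F v b ->
  is_Flim F (fun n => u n + v n) (a + b).
Proof.
move=> ha hb eps eps0; have eps20 : 0 < eps / 2 by rewrite divr_gt0.
apply: (ultraS (ultraI (ha _ eps20) (hb _ eps20))) => n /= [h1 h2].
by rewrite (splitr eps) opprD addrACA (le_lt_trans (ler_normD _ _)) // ltrD.
Qed.

End FreeUltrafilter.

Lemma free_ultrafilter_containing {S : set nat} :
  (forall N, exists2 n, (N <= n)%N & S n) -> exists F, free_ultrafilter F /\ F S.
Proof.
move=> Sunb.
pose B := filter_from setT (fun N => S `&` [set n | (N <= n)%N]).
have FB : Filter B.
  apply: filter_fromT_filter; first by exists 0%N.
  move=> i j; exists (maxn i j) => n /= [Sn]; rewrite geq_max => /andP[hi hj].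
  by split; split.
have PB : ProperFilter B.
  by apply: filter_from_proper => N _; have [n Nn Sn] := Sunb N; exists n.
have [G [UG BG]] := ultraFilterLemma PB.
have PG : ProperFilter G by apply: ultra_proper.
have GN N : G [set n | (N <= n)%N] by apply: BG; exists N => // n [].
exists G; split; last by apply: BG; exists 0%N => // n [].
split.
- exact: filter_not_empty.
- exact: filterT.
- by move=> S1 T1 HS HST; apply: filterS HST HS.
- by move=> S1 T1; apply: filterI.
- split; first by move=> S1; apply: in_ultra_setVsetC.
  move=> S1 /finite_set_nat_bounded [N HN] GS1; apply: (@filter_not_empty _ G PG).
  apply: filterS (filterI GS1 (GN N)) => n /= [/HN].
  by rewrite ltnNge => /negP.
Qed.

Section WeightedMeans.
Context {R : realType}.
Implicit Types (d w : nat -> R) (n : nat).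

Definition psum d n := \sum_(k < n) d k.

Lemma psumS d n : psum d n.+1 = psum d n + d n.
Proof. by rewrite /psum big_ord_recr. Qed.

Lemma psum_ge0 w n : (forall k, 0 <= w k) -> 0 <= psum w n.
Proof. by move=> w0; apply: sumr_ge0. Qed.

Lemma psum_gt0 w n : (forall k, 0 < w k) -> 0 < psum w n.+1.
Proof.
move=> w0; rewrite psumS ltr_wpDl ?psum_ge0 // => k; exact: ltW.
Qed.

Lemma psum1 n : psum (fun=> 1) n = n%:R.
Proof. by rewrite /psum sumr_const card_ord. Qed.

Lemma abel_summation d w n :
  \sum_(k < n.+1) d k * w k =
  psum d n.+1 * w n + \sum_(k < n) psum d k.+1 * (w k - w k.+1).
Proof.
elim: n => [|n IH].
  by rewrite !big_ord_recr !big_ord0 /psum big_ord_recr big_ord0 /=; ring.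
by rewrite big_ord_recr /= IH [in RHS]big_ord_recr /= (psumS d n.+1); ring.
Qed.

Lemma ler_sum_head_tail {a b : nat -> R} {eps : R} {K n} :
  0 <= eps -> (K <= n)%N -> (forall k, 0 <= b k) ->
  (forall k, (K <= k)%N -> a k <= eps * b k) ->
  \sum_(k < n) a k <= \sum_(k < K) a k + eps * \sum_(k < n) b k.
Proof.
move=> eps0 Kn b0 ab; rewrite -!(big_mkord xpredT).
rewrite (big_cat_nat (leq0n K) Kn) /= lerD2l.
rewrite [X in _ <= _ * X](big_cat_nat (leq0n K) Kn) /= mulrDr ler_wpDl //.
  by rewrite mulr_ge0 // sumr_ge0.
by rewrite mulr_sumr; apply: ler_sum_nat => k /andP[Kk _]; apply: ab.
Qed.

Lemma monotone_variation w n : (forall k, 0 <= w k) ->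
  (forall k, w k.+1 <= w k) \/ (forall k, w k <= w k.+1) ->
  \sum_(k < n) k.+1%:R * `|w k - w k.+1| <= psum w n.+1 + n.+1%:R * w n.
Proof.
move=> w0 wmono.
have := abel_summation (fun=> 1) w n; rewrite psum1.
under eq_bigr do rewrite mul1r; under [X in _ = _ + X]eq_bigr do rewrite psum1.
rewrite -/(psum w n.+1) => Wn.
have Ww : 0 <= n.+1%:R * w n by rewrite mulr_ge0.
have W0 : 0 <= psum w n.+1 by exact: psum_ge0.
set V := \sum_(k < n) _ in Wn.
case: wmono => wmono.
- under eq_bigr do rewrite ger0_norm ?subr_ge0 //.
  by rewrite -/V; lra.
- under eq_bigr do rewrite ler0_norm ?subr_le0 // mulrN.
  by rewrite sumrN -/V; lra.
Qed.

Lemma weighted_mean_cvg0 {d w} {M : R} :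
  (forall k, 0 < w k) ->
  (forall k, w k.+1 <= w k) \/ (forall k, w k <= w k.+1) ->
  (forall n, n.+1%:R * w n <= M * psum w n.+1) ->
  (fun n => psum w n.+1) @ \oo --> +oo ->
  (fun n => psum d n.+1 / n.+1%:R) @ \oo --> 0 ->
  (fun n => (\sum_(k < n.+1) d k * w k) / psum w n.+1) @ \oo --> 0.
Proof.
move=> w_gt0 wmono HM /cvgryPge Wy /cvgrPdist_le dmean.
have w_ge0 k : 0 <= w k by exact: ltW.
have W_gt0 n : 0 < psum w n.+1 by exact: psum_gt0.
have M_gt0 : 0 < M.
  have := HM 0%N; rewrite /psum big_ord1 mul1r -[X in X <= _]mul1r ler_pM2r //.
  by move/(lt_le_trans ltr01).
apply/cvgrPdist_le => eta eta0.
pose eps := eta / (2 * (1 + 2 * M)).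
have eps0 : 0 < eps by rewrite divr_gt0 // pmulr_rgt0 //; lra.
have [K _ HK] := dmean eps eps0.
have Sle k : (K <= k)%N -> `|psum d k.+1| <= eps * k.+1%:R.
  move=> /HK /=; rewrite sub0r normrN normrM normfV (ger0_norm (ler0n _ _)).
  by rewrite ler_pdivrMr.
pose C := \sum_(k < K) `|psum d k.+1| * `|w k - w k.+1|.
have [N _ HN] := Wy (2 * C / eta).
exists (maxn N K) => // n /=; rewrite geq_max => /andP[nN nK].
rewrite sub0r normrN normrM normfV (gtr0_norm (W_gt0 n)) ler_pdivrMr // abel_summation.
set W := psum w n.+1.
have last_term : `|psum d n.+1 * w n| <= eps * M * W.
  rewrite normrM (gtr0_norm (w_gt0 n)) -mulrA.
  by apply: (le_trans (ler_wpM2r (w_ge0 n) (Sle n nK))); rewrite -mulrA ler_wpM2l ?HM // ltW.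
have sum_terms : `|\sum_(k < n) psum d k.+1 * (w k - w k.+1)| <= C + eps * ((1 + M) * W).
  apply: (le_trans (ler_norm_sum _ _ _)); under eq_bigr do rewrite normrM.
  have var_ge0 k : 0 <= k.+1%:R * `|w k - w k.+1| by rewrite mulr_ge0.
  have tail k : (K <= k)%N ->
      `|psum d k.+1| * `|w k - w k.+1| <= eps * (k.+1%:R * `|w k - w k.+1|).
    by move=> Kk; rewrite mulrA ler_wpM2r // Sle.
  apply: (le_trans (ler_sum_head_tail (ltW eps0) nK var_ge0 tail)).
  rewrite lerD2l ler_wpM2l ?(ltW eps0) //.
  apply: (le_trans (monotone_variation _ n w_ge0 wmono)).
  by rewrite mulrDl mul1r lerD2l HM.
have C_le : C <= eta / 2 * W.
  by move: (HN n nN); rewrite ler_pdivrMr // -/W; lra.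
have epsE : eps * M * W + eps * ((1 + M) * W) = eta / 2 * W.
  by rewrite /eps; field; lra.
by apply: (le_trans (ler_normD _ _)); lra.
Qed.

End WeightedMeans.

Section PowerWeights.
Context {R : realType}.
Implicit Types alpha : R.

Definition weight alpha k : R := k.+1%:R `^ alpha.

Lemma NsumE alpha n : Nsum alpha n = psum (weight alpha) n.
Proof. by []. Qed.

Lemma weight_gt0 alpha k : 0 < weight alpha k.
Proof. by rewrite powR_gt0 // ltr0Sn. Qed.

Lemma le0_ger_powR (a b r : R) : r <= 0 -> 0 < a -> a <= b -> b `^ r <= a `^ r.
Proof.
move=> r0 a0 ab; have b0 := lt_le_trans a0 ab.
by rewrite /powR !gt_eqF // ler_expR ler_wnM2l // ler_ln // posrE.
Qed.

Lemma weight_monotone alpha :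
  (forall k, weight alpha k.+1 <= weight alpha k) \/
  (forall k, weight alpha k <= weight alpha k.+1).
Proof.
have [a0|a0] := leP 0 alpha.
  by right => k; apply: ge0_ler_powR; rewrite ?nnegrE ?ler_nat.
by left => k; apply: le0_ger_powR; [exact: ltW | exact: ltr0Sn | rewrite ler_nat].
Qed.

(* For alpha >= 0 pair k with n - k: one of k + 1, n - k + 1 is at least (n + 1) / 2. *)
Lemma weight_doubling alpha : exists M,
  forall n, n.+1%:R * weight alpha n <= M * psum (weight alpha) n.+1.
Proof.
have sum_const (x : R) n : n.+1%:R * x = \sum_(k < n.+1) x.
  by rewrite sumr_const card_ord mulr_natl.
have [a0|a0] := leP 0 alpha; last first.
  exists 1 => n; rewrite mul1r sum_const; apply: ler_sum => k _.
  by apply: le0_ger_powR; [exact: ltW | exact: ltr0Sn | rewrite ler_nat ltn_ord].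
exists (2 * 2 `^ alpha) => n.
pose h : R := n.+1%:R / 2.
have h_ge0 : 0 <= h by rewrite divr_ge0.
have pair k : (k < n.+1)%N -> h `^ alpha <= weight alpha k + weight alpha (n - k).
  move=> kn; have w1 := weight_gt0 alpha k; have w2 := weight_gt0 alpha (n - k).
  have [hk|hk] := leqP n.+1 (k.+1 * 2).
    suff : h `^ alpha <= weight alpha k by lra.
    by apply: ge0_ler_powR; rewrite ?nnegrE // ler_pdivrMr // -natrM ler_nat.
  suff : h `^ alpha <= weight alpha (n - k) by lra.
  apply: ge0_ler_powR; rewrite ?nnegrE // ler_pdivrMr // -natrM ler_nat.
  by move: hk kn; clear; lia.
have twice : 2 * psum (weight alpha) n.+1 =
    \sum_(k < n.+1) (weight alpha k + weight alpha (n - k)).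
  rewrite big_split /= mulr_natl mulr2n; congr (_ + _).
  rewrite /psum -(big_mkord xpredT (weight alpha)) big_rev_mkord subn0.
  by apply: eq_bigr => k _; rewrite subSS.
have hsum : n.+1%:R * h `^ alpha <= 2 * psum (weight alpha) n.+1.
  by rewrite twice sum_const; apply: ler_sum => k _; apply: pair.
have -> : weight alpha n = 2 `^ alpha * h `^ alpha.
  by rewrite /weight -powRM // /h mulrC divfK.
by rewrite mulrCA [2 * _]mulrC -mulrA ler_wpM2l ?powR_ge0.
Qed.

Lemma Nsum_cvgy {alpha} : -1 <= alpha -> (fun n => Nsum alpha n.+1) @ \oo --> +oo.
Proof.
move=> alpha_ge.
have harmonic_cvgy : series (@harmonic R) @ \oo --> +oo.
  apply: nondecreasing_dvgn_lt (@dvg_harmonic R).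
  by apply: nondecreasing_series => k _ _; exact: harmonic_ge0.
apply: ger_cvgy harmonic_cvgy; near=> n.
rewrite /series /= (big_mkord xpredT) NsumE psumS ler_wpDr ?(ltW (weight_gt0 _ _)) //.
by apply: ler_sum => k _; rewrite /weight -powR_inv1 // ler_powR // ler1n.
Unshelve. all: end_near. Qed.

End PowerWeights.

Section Ratio.
Context {R : realType}.
Implicit Types (alpha l : R) (E : set nat).

Lemma Nsum_gt0 alpha n : 0 < Nsum alpha n.+1.
Proof. by rewrite NsumE; apply: psum_gt0 => k; exact: weight_gt0. Qed.

Lemma ratio_ge0_le1 E alpha n : 0 <= ratio E alpha n <= 1.
Proof.
have W0 := Nsum_gt0 alpha n.
have wsum_ge0 : 0 <= wsum E alpha n.+1.
  by apply: sumr_ge0 => k _; rewrite mulr_ge0 ?powR_ge0.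
rewrite divr_ge0 ?(ltW W0) //= ler_pdivrMr // mul1r.
by apply: ler_sum => k _; rewrite indicE; case: (_ \in _); rewrite ?mul1r ?mul0r ?powR_ge0.
Qed.

Lemma ratio_setT alpha n : ratio setT alpha n = 1.
Proof.
rewrite /ratio /wsum (eq_bigr (fun k : 'I_n.+1 => k.+1%:R `^ alpha)).
  by rewrite divff // gt_eqF // Nsum_gt0.
by move=> k _; rewrite indicT mul1r.
Qed.

Lemma ratio_setU E1 E2 alpha n : E1 `&` E2 = set0 ->
  ratio (E1 `|` E2) alpha n = ratio E1 alpha n + ratio E2 alpha n.
Proof.
move=> E12; rewrite /ratio -mulrDl /wsum -big_split /=; congr (_ / _).
apply: eq_bigr => k _; rewrite -mulrDl !indicE in_setU.
have : ~~ ((nat_of_ord k \in E1) && (nat_of_ord k \in E2)) by rewrite -in_setI E12 in_set0.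
by case: (_ \in E1); case: (_ \in E2); rewrite ?addr0 ?add0r.
Qed.

(* The centred indicator d = 1_E - l has Cesaro means tending to 0; the weighted means
   of d are then (ratio E alpha n - l). *)
Theorem ratio_cvg_density {E l alpha} : -1 <= alpha ->
  has_density E l -> ratio E alpha @ \oo --> l.
Proof.
move=> alpha_ge /subr_cvg0 hd; apply/subr_cvg0.
pose d k : R := \1_E k - l.
have [M HM] := weight_doubling alpha.
have dmean : (fun n => psum d n.+1 / n.+1%:R) @ \oo --> 0.
  suff -> : (fun n => psum d n.+1 / n.+1%:R) = (fun n => counting R E n.+1 / n.+1%:R - l).
    exact: hd.
  apply/funext => n; rewrite /psum /d sumrB sumr_const card_ord mulrBl.
  by rewrite -[l *+ _]mulr_natr mulfK ?pnatr_eq0.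
suff -> : (fun n => ratio E alpha n - l) =
    (fun n => (\sum_(k < n.+1) d k * weight alpha k) / psum (weight alpha) n.+1).
  exact: (weighted_mean_cvg0 (weight_gt0 alpha) (weight_monotone alpha) HM
                              (Nsum_cvgy alpha_ge) dmean).
apply/funext => n; rewrite -NsumE /ratio /wsum /Nsum /weight.
under [X in _ = X / _]eq_bigr do rewrite mulrBl.
rewrite sumrB -mulr_sumr.
by field; rewrite gt_eqF // Nsum_gt0.
Qed.

End Ratio.

Section Frequently.
Context {R : realType}.
Implicit Types (u : R^nat) (y : R).

Lemma limn_inf_lt_frequently {u y} : bounded_fun u -> limn_inf u < y ->
  forall N, exists2 n, (N <= n)%N & u n < y.
Proof.
move=> ub uy N; apply: contrapT => notlt; move: uy; apply/negP; rewrite -leNgt.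
rewrite limn_infE //; apply: (@le_trans _ _ (infs u N)); last first.
  by apply: ub_le_sup; [exact: bounded_fun_has_ubound_infs | exists N].
apply: lb_le_inf; first by exists (u N), N => /=.
move=> _ [n /= Nn <-]; rewrite leNgt; apply/negP => uny; apply: notlt; by exists n.
Qed.

Lemma lt_limn_sup_frequently {u y} : bounded_fun u -> y < limn_sup u ->
  forall N, exists2 n, (N <= n)%N & y < u n.
Proof.
move=> ub yu N; apply: contrapT => notgt; move: yu; apply/negP; rewrite -leNgt.
rewrite limn_supE //; apply: (@le_trans _ _ (sups u N)).
  by apply: ge_inf; [exact: bounded_fun_has_lbound_sups | exists N].
apply: ge_sup; first by exists (u N), N => /=.
move=> _ [n /= Nn <-]; rewrite leNgt; apply/negP => ynu; apply: notgt; by exists n.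
Qed.

End Frequently.

Section DensityMeasures.
Context {R : realType}.

Lemma ratio_bounded (E : set nat) (alpha : R) : bounded_fun (ratio E alpha).
Proof.
rewrite /bounded_near; near=> M => n _ /=.
have /andP[r0 r1] := ratio_ge0_le1 E alpha n.
by rewrite ger0_norm // (le_trans r1) //; near: M; exact: nbhs_pinfty_ge.
Unshelve. all: end_near. Qed.

Lemma is_Flim_ratio {F} (E : set nat) (alpha : R) : free_ultrafilter F ->
  is_Flim F (ratio E alpha) (Flim F (ratio E alpha)).
Proof. by move=> hF; exact: (is_Flim_Flim hF (ratio_ge0_le1 E alpha)). Qed.

Lemma muFa_density_measure {w : Amb R} : OmegaSet w -> density_measure (muFa w).
Proof.
case: w => F alpha [/= hF alpha_ge]; rewrite /muFa /=; split.
- move=> E; have lim := is_Flim_ratio E alpha hF.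
  rewrite (is_Flim_ge hF lim) ?(is_Flim_le hF lim) //;
    by apply: (ultraS hF (ultraT hF)) => n _; case/andP: (ratio_ge0_le1 E alpha n).
- apply: (FlimE hF) => eps eps0; apply: (ultraS hF (ultraT hF)) => n _ /=.
  by rewrite ratio_setT subrr normr0.
- move=> E1 E2 E12; apply: (FlimE hF).
  rewrite (funext (fun n => ratio_setU _ _ alpha n E12)).
  exact: (is_FlimD hF (is_Flim_ratio E1 alpha hF) (is_Flim_ratio E2 alpha hF)).
- move=> E l hd; apply: (FlimE hF).
  exact: (cvg_is_Flim hF (ratio_cvg_density alpha_ge hd)).
Qed.

Lemma density_measure_convex (mu1 mu2 : set nat -> R) (t : R) : 0 <= t <= 1 ->
  density_measure mu1 -> density_measure mu2 ->
  density_measure (fun E => t * mu1 E + (1 - t) * mu2 E).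
Proof.
move=> /andP[t0 t1] [mu1_01 mu1T mu1U mu1d] [mu2_01 mu2T mu2U mu2d]; split.
- move=> E; have /andP[? ?] := mu1_01 E; have /andP[? ?] := mu2_01 E.
  by apply/andP; split; nra.
- by rewrite mu1T mu2T; ring.
- by move=> E1 E2 E12; rewrite mu1U // mu2U //; ring.
- by move=> E l hd; rewrite (mu1d _ _ hd) (mu2d _ _ hd); ring.
Qed.

(* Witnesses on either side of x: take alpha with d_alpha(A) beyond x, and an
   ultrafilter containing the (infinitely many) indices where the ratio is beyond x. *)
Lemma lower_d_infty_witness {A : set nat} {x : R} : lower_d_infty R A < x ->
  exists2 w, OmegaSet w & muFa w A < x.
Proof.
move=> Ax; have S0 : [set lower_d a A | a in [set a : R | -1 <= a]] !=set0.
  by exists (lower_d (-1) A), (-1) => /=.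
have [_ [alpha alpha_ge <-] Aalpha] := inf_lt S0 Ax.
pose y := (lower_d alpha A + x) / 2.
have Ay : lower_d alpha A < y by rewrite /y; lra.
have yx : y < x by rewrite /y; lra.
have [F [hF FA]] := free_ultrafilter_containing
  (limn_inf_lt_frequently (ratio_bounded A alpha) Ay).
exists (F, alpha) => //; apply: (le_lt_trans _ yx).
apply: (is_Flim_le hF (is_Flim_ratio A alpha hF)).
by apply: (ultraS hF FA) => n /= /ltW.
Qed.

Lemma upper_d_infty_witness {A : set nat} {x : R} : x < upper_d_infty R A ->
  exists2 w, OmegaSet w & x < muFa w A.
Proof.
move=> Ax; have S0 : [set upper_d a A | a in [set a : R | -1 <= a]] !=set0.
  by exists (upper_d (-1) A), (-1) => /=.
have [_ [alpha alpha_ge <-] Aalpha] := sup_gt S0 Ax.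
pose y := (upper_d alpha A + x) / 2.
have yA : y < upper_d alpha A by rewrite /y; lra.
have xy : x < y by rewrite /y; lra.
have [F [hF FA]] := free_ultrafilter_containing
  (lt_limn_sup_frequently (ratio_bounded A alpha) yA).
exists (F, alpha) => //; apply: (lt_le_trans xy).
apply: (is_Flim_ge hF (is_Flim_ratio A alpha hF)).
by apply: (ultraS hF FA) => n /= /ltW.
Qed.

End DensityMeasures.

Section TwoPointMeasure.
Import HBNNSimple.
Context {d} {T : measurableType d} {R : realType}.
Variables (a b : T) (s t : {nonneg R}).

Definition two_point := measure_add (mscale s (@dirac _ T a R)) (mscale t (@dirac _ T b R)).

Lemma two_pointE A : two_point A = (s%:num * \1_A a + t%:num * \1_A b)%:E.
Proof.
rewrite /two_point measure_addE.
change (s%:num%:E * \d_a A + t%:num%:E * \d_b A =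
  (s%:num * \1_A a + t%:num * \1_A b)%:E)%E.
by rewrite /dirac -!EFinM -EFinD.
Qed.

Lemma sintegral_two_point (h : {nnsfun T >-> R}) :
  sintegral two_point h = (s%:num * h a + t%:num * h b)%:E.
Proof.
have := integral_nnsfun two_point (@measurableT _ T) h; rewrite patch_setT => <-.
have mh : measurable_fun [set: T] (EFin \o h).
  by apply/measurable_EFinP; exact: measurable_funPT.
have h0 x : [set: T] x -> (0 <= (h x)%:E)%E by move=> _; rewrite lee_fin.
rewrite ge0_integral_measure_add // !ge0_integral_mscale // !integral_dirac //.
by rewrite !diracT !mul1e -!EFinM -EFinD.
Qed.

(* g need not be measurable: its integral is the supremum over simple functions below g,
   which is attained by the simple function taking the values g a at a and g b at b. *)
Lemma integral_two_point (D : set T) (g : T -> R) : measurable D -> D a -> D b ->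
  a != b -> measurable [set a] -> measurable [set b] -> (forall x, D x -> 0 <= g x) ->
  (\int[two_point]_(x in D) (g x)%:E = (s%:num * g a + t%:num * g b)%:E)%E.
Proof.
move=> mD Da Db ab ma mb g0.
rewrite ge0_integralE; last by move=> x Dx; rewrite lee_fin g0.
apply/eqP; rewrite eq_le; apply/andP; split.
  apply: ge_ereal_sup => _ [h hg <-]; rewrite sintegral_two_point lee_fin.
  have := hg a; have := hg b; rewrite /patch !mem_set // !lee_fin => hb ha.
  by rewrite lerD // ler_wpM2l.
apply: ereal_sup_ubound => /=.
pose ka := scale_nnsfun (indic_nnsfun R ma) (g0 _ Da).
pose kb := scale_nnsfun (indic_nnsfun R mb) (g0 _ Db).
have kE x : add_nnsfun ka kb x = g a * (x == a)%:R + g b * (x == b)%:R.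
  by rewrite /= /mindic !indicE !in_set1.
exists (add_nnsfun ka kb).
  move=> x; rewrite kE /patch.
  have [->|xa] := eqVneq x a; first by rewrite mem_set // (negbTE ab) mulr1 mulr0 addr0.
  have [->|xb] := eqVneq x b; first by rewrite mem_set // mulr1 mulr0 add0r.
  by rewrite !mulr0 addr0; case: ifPn => // /set_mem Dx; rewrite lee_fin g0.
rewrite sintegral_two_point !kE !eqxx (negbTE ab) eq_sym (negbTE ab).
by rewrite !mulr1 !mulr0 addr0 add0r.
Qed.

End TwoPointMeasure.

Lemma mnormalize_mass1 d (T : measurableType d) (R : realType)
    (mu : {measure set T -> \bar R}) (P : probability T R) (A : set T) :
  mu setT = 1%E -> mnormalize mu P A = mu A.
Proof. by move=> mu1; rewrite /mnormalize mu1 /= onee_eq0 /= invr1 mule1. Qed.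

Section OmegaMeasurable.
Context {R : realType}.

Lemma OmegaG_measurable (U : set (Amb R)) : OmegaG U -> measurable (U : set (OmegaT R)).
Proof. exact: sub_sigma_algebra. Qed.

Lemma OmegaSet_measurable : measurable (@OmegaSet R : set (OmegaT R)).
Proof.
apply: OmegaG_measurable; rewrite /OmegaG /= setIid; split => // w Ow.
exists setT, (w.2 - 1), (w.2 + 1); split; last by move=> v [].
by split => //; split; [exact: ultraT (proj1 Ow) | apply/andP; split; lra].
Qed.

Lemma free_ultrafilter_sep {F G : set (set nat)} :
  free_ultrafilter F -> free_ultrafilter G -> F <> G -> exists E, F E /\ ~ G E.
Proof.
move=> hF hG FG; apply: contrapT => noE; apply: FG.
have FG E : F E -> G E by move=> FE; apply: contrapT => nGE; apply: noE; exists E.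
apply/funext => E; apply/propext; split; first exact: FG.
move=> GE; apply: contrapT => nFE; apply: (ultra_not_empty hG).
have FCE : F (~` E) by case: (ultra_setVsetC hF E).
by rewrite -(setICr E); exact: (ultraI hG GE (FG _ FCE)).
Qed.

(* A point of Omega other than w is separated from w either by a set E of its
   ultrafilter not in w.1, or, when the ultrafilters agree, by an interval. *)
Lemma OmegaG_setC1 (w : Amb R) : OmegaSet w -> OmegaG (~` [set w]).
Proof.
move=> [hw _]; split; first by move=> v [].
case=> F r [/= vw [/= hF r_ge]].
have [Fw|Fw] := pselect (F = w.1); last first.
  have [E [FE wE]] := free_ultrafilter_sep hF hw Fw.
  exists E, (r - 1), (r + 1); split; first by split => //; split => //=; lra.
  by move=> u [Ou [uE _]]; split => // uw; apply: wE; rewrite -uw.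
have rw : r != w.2 by apply/eqP => rw; apply: vw; case: w hw Fw rw => /= ? ? _ -> ->.
pose delta := `|r - w.2|.
have delta_gt0 : 0 < delta by rewrite normr_gt0 subr_eq0.
exists setT, (r - delta), (r + delta); split.
  by split => //; split; [exact: ultraT hF | rewrite /=; lra].
move=> u [Ou [_ /= ur]]; split => // uw; move: ur; rewrite uw -ltr_distlC.
by rewrite ltxx.
Qed.

Lemma measurable_Omega_set1 (w : Amb R) : OmegaSet w ->
  measurable ([set w] : set (OmegaT R)).
Proof.
move=> Ow; have -> : [set w] = @OmegaSet R `&` ~` (~` [set w]).
  by rewrite setCK; apply/seteqP; split => [v -> | v []].
apply: measurableI; first exact: OmegaSet_measurable.
by apply: measurableC; apply: OmegaG_measurable; exact: OmegaG_setC1.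
Qed.

End OmegaMeasurable.

Theorem theorem4p4 (R : realType) (A : set nat) (x : R) :
  lower_d_infty R A < x < upper_d_infty R A ->
  exists (psi : probability (OmegaT R) R) (mu : set nat -> R),
    [/\ psi (@OmegaSet R) = 1%E,
        (forall E : set nat,
            (\int[psi]_(w in @OmegaSet R) (muFa w E)%:E)%E = (mu E)%:E),
        density_measure mu &
        mu A = x].
Proof.
move=> /andP[Ax xA].
have [w1 Ow1 w1A] := lower_d_infty_witness Ax.
have [w2 Ow2 w2A] := upper_d_infty_witness xA.
pose t := (muFa w2 A - x) / (muFa w2 A - muFa w1 A).
have t_ge0 : 0 <= t by rewrite divr_ge0 //; lra.
have t_le1 : t <= 1 by rewrite ler_pdivrMr ?mul1r; lra.
have t1_ge0 : 0 <= 1 - t by rewrite subr_ge0.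
have w12 : w1 != w2 by apply: contraTneq w1A => ->; rewrite -leNgt ltW // (lt_trans xA w2A).
pose m := two_point (w1 : OmegaT R) w2 (NngNum t_ge0) (NngNum t1_ge0).
have m1 : m setT = 1%E by rewrite /m two_pointE !indicE !mem_set // !mulr1 subrKC.
pose psi := mnormalize m \d_(w1 : OmegaT R).
have psiE S : psi S = m S by exact: mnormalize_mass1.
exists psi, (fun E => t * muFa w1 E + (1 - t) * muFa w2 E); split.
- by rewrite [LHS]psiE /m two_pointE !indicE !mem_set // !mulr1 subrKC.
- move=> E; rewrite (eq_measure_integral m) => [|S _ _]; last exact: psiE.
  rewrite integral_two_point //; do ?exact: measurable_Omega_set1.
  + exact: OmegaSet_measurable.
  + by move=> w Ow; have [/(_ E)/andP[] ] := muFa_density_measure Ow.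
- apply: density_measure_convex; first by rewrite t_ge0 t_le1.
  + exact: muFa_density_measure Ow1.
  + exact: muFa_density_measure Ow2.
- by rewrite /t; field; lra.
Qed.
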